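(* Let $\gamma>0$ or $\gamma<-1$, and let $\theta\in\mathbb R^d$. For a dataset $\mathcal D=\{(X_i,Y_i)\}_{i=1}^n\subset\mathbb R^d\times\{0,1\}$ define $$S_\gamma(\theta;\mathcal D)=\frac1n\sum_{i=1}^n\Big[\frac{\exp\{(\gamma+1)Y_i\theta^\top X_i\}}{1+\exp\{(\gamma+1)\theta^\top X_i\}}\Big]^{\frac{\gamma}{\gamma+1}}\Big\{Y_i-\frac{\exp\{(\gamma+1)\theta^\top X_i\}}{1+\exp\{(\gamma+1)\theta^\top X_i\}}\Big\}X_i.$$ Then $\sup_{\mathcal D}|\theta^\top S_\gamma(\theta;\mathcal D)|<\infty$, where the supremum is over all $n\ge1$ and all datasets $\mathcal D$.
   Context: $S_\gamma(\theta;\mathcal D)$ is the $\gamma$-estimating function (with the counting measure on $\{0,1\}$ as reference measure) for the binary logistic model $p(y|x,\theta)=\exp(y\theta^\top x)/(1+\exp(\theta^\top x))$. *)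

From HB Require Import structures.
From mathcomp Require Import all_boot all_order all_algebra.
From mathcomp Require Import all_classical all_reals all_analysis.
Set Implicit Arguments. Unset Strict Implicit. Unset Printing Implicit Defensive.
Import Order.TTheory GRing.Theory Num.Theory.
Local Open Scope ring_scope.

Definition dotv (R : realType) (d : nat) (u v : 'rV[R]_d) : R :=
  \sum_(j < d) u 0 j * v 0 j.

Definition S_gamma (R : realType) (d n : nat) (gamma : R) (theta : 'rV[R]_d)
  (X : 'I_n -> 'rV[R]_d) (Y : 'I_n -> bool) : 'rV[R]_d :=
  (n%:R)^-1 *: \sum_(i < n)
    (( (expR ((gamma + 1) * (Y i)%:R * dotv theta (X i))
         / (1 + expR ((gamma + 1) * dotv theta (X i)))) `^ (gamma / (gamma + 1)))
     * ((Y i)%:R - expR ((gamma + 1) * dotv theta (X i))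
                   / (1 + expR ((gamma + 1) * dotv theta (X i)))))
    *: X i.

From HB Require Import structures.
From mathcomp Require Import all_boot all_order all_algebra.
From mathcomp Require Import all_classical all_reals all_analysis.
From mathcomp Require Import ring lra.
Import Order.TTheory GRing.Theory Num.Theory.
Local Open Scope ring_scope.

(* With u = (gamma + 1) theta^T x and sigma the logistic function, the i-th
   summand of theta^T S_gamma is, up to the factor 1 / (gamma + 1),
   sigma(+-u)^b (1 - sigma(+-u)) (+-u) with b = gamma / (gamma + 1) > 0.
   For v >= 0 this is at most v / (1 + e^v) <= 1; for v < 0 the factor
   sigma(v)^b <= e^(b v) kills the linear growth, as -v e^(b v) <= 1 / b.
   Each summand is thus bounded uniformly in the data, hence so is their mean. *)

Section Logistic.
Variable R : realType.
Implicit Types (b u v : R).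

Definition logistic v : R := expR v / (1 + expR v).

Lemma logistic_denom_gt0 v : 0 < 1 + expR v.
Proof. by rewrite ltr_wpDl ?expR_gt0. Qed.

Lemma logistic_gt0 v : 0 < logistic v.
Proof. by rewrite divr_gt0 ?expR_gt0 ?logistic_denom_gt0. Qed.

Lemma logistic_le1 v : logistic v <= 1.
Proof. by rewrite ler_pdivrMr ?logistic_denom_gt0 // mul1r lerDr. Qed.

Lemma logistic_le_expR v : logistic v <= expR v.
Proof.
by rewrite ler_pdivrMr ?logistic_denom_gt0 // ler_peMr ?expR_ge0 // lerDl.
Qed.

Lemma subr_logistic v : 1 - logistic v = (1 + expR v)^-1.
Proof. by rewrite /logistic; field; rewrite gt_eqF ?logistic_denom_gt0. Qed.

Lemma logisticN v : logistic (- v) = 1 - logistic v.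
Proof.
have e0 := expR_gt0 v.
rewrite subr_logistic /logistic expRN.
by field; rewrite !gt_eqF ?logistic_denom_gt0.
Qed.

Lemma subr_logistic_mul_le1 u : (1 - logistic u) * u <= 1.
Proof.
rewrite subr_logistic mulrC ler_pdivrMr ?logistic_denom_gt0 // mul1r.
by have := expR_ge1Dx u; lra.
Qed.

Lemma powR_logistic_le1 b v : 0 <= b -> logistic v `^ b <= 1.
Proof.
move=> b0; have -> : (1 : R) = 1 `^ b by rewrite powR1.
by rewrite ge0_ler_powR ?nnegrE ?logistic_le1 // ltW ?logistic_gt0.
Qed.

Lemma powR_logistic_le_expR b v : 0 <= b -> logistic v `^ b <= expR (v * b).
Proof.
move=> b0; rewrite expRM.
by rewrite ge0_ler_powR ?nnegrE ?logistic_le_expR ?expR_ge0 // ltW ?logistic_gt0.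
Qed.

Lemma expR_mulN_le_inv b u : 0 < b -> expR (u * b) * - u <= b^-1.
Proof.
move=> b0; have eb := expR_gt0 (u * b).
have := expR_ge1Dx (- (u * b)); rewrite expRN => h.
rewrite -(ler_pM2r eb) mulVf ?gt_eqF // in h.
rewrite -(ler_pM2l b0) mulfV ?gt_eqF //; nra.
Qed.

Lemma logistic_score_le b u : 0 < b ->
  `|logistic u `^ b * (1 - logistic u) * u| <= 1 + b^-1.
Proof.
move=> b0; have p0 : 0 <= logistic u `^ b by apply: powR_ge0.
have s0 : 0 <= 1 - logistic u by rewrite subr_ge0 logistic_le1.
have ib0 : 0 <= b^-1 by rewrite invr_ge0 ltW.
have [u0 | u0] := lerP 0 u.
- rewrite ger0_norm ?mulr_ge0 // -mulrA.
  apply: (le_trans (ler_wpM2r _ (powR_logistic_le1 b u (ltW b0)))).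
    by rewrite mulr_ge0.
  by rewrite mul1r; apply: (le_trans (subr_logistic_mul_le1 u)); rewrite lerDl.
- rewrite normrM (ger0_norm (mulr_ge0 p0 s0)) (ltr0_norm u0).
  apply: (@le_trans _ _ (expR (u * b) * - u)); last first.
    by apply: (le_trans (expR_mulN_le_inv b u b0)); rewrite lerDr.
  rewrite ler_pM2r ?oppr_gt0 //.
  apply: (le_trans _ (powR_logistic_le_expR b u (ltW b0))).
  by rewrite ler_piMr // lerBlDr lerDl ltW ?logistic_gt0.
Qed.

(* For [y = false] the likelihood [1 / (1 + e^u)] is [logistic (- u)], and the
   summand is the [y = true] one evaluated at [- u]. *)
Lemma logistic_residual_le b u (y : bool) : 0 < b ->
  `|(expR (y%:R * u) / (1 + expR u)) `^ b * (y%:R - logistic u) * u|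
    <= 1 + b^-1.
Proof.
move=> b0; case: y => /=; rewrite ?mulr1n ?mulr0n.
  by rewrite mul1r; apply: logistic_score_le.
have lik0 : expR (0 * u) / (1 + expR u) = logistic (- u).
  by rewrite logisticN subr_logistic mul0r expR0 div1r.
have logistic_flip : logistic u = 1 - logistic (- u) by rewrite logisticN subKr.
rewrite lik0 sub0r logistic_flip mulrN mulNr -mulrN.
exact: logistic_score_le.
Qed.

Lemma scaled_logistic_residual_le (a b t : R) (y : bool) : a != 0 -> 0 < b ->
  `|(expR (a * y%:R * t) / (1 + expR (a * t))) `^ b
     * (y%:R - expR (a * t) / (1 + expR (a * t))) * t| <= (1 + b^-1) / `|a|.
Proof.
move=> a0 b0; rewrite ler_pdivlMr ?normr_gt0 // -normrM.
rewrite [a * _ * t]mulrAC [a * t * _]mulrC -[_ * t * a]mulrA (mulrC t a).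
exact: logistic_residual_le.
Qed.

End Logistic.

Lemma dotvZ (R : realType) (d : nat) (u v : 'rV[R]_d) (c : R) :
  dotv u (c *: v) = c * dotv u v.
Proof. by rewrite /dotv mulr_sumr; apply: eq_bigr => j _; rewrite mxE mulrCA. Qed.

Lemma dotv_sum (R : realType) (d n : nat) (u : 'rV[R]_d) (F : 'I_n -> 'rV[R]_d) :
  dotv u (\sum_(i < n) F i) = \sum_(i < n) dotv u (F i).
Proof.
rewrite /dotv; under eq_bigr do rewrite summxE mulr_sumr.
by rewrite exchange_big.
Qed.

Lemma norm_mean_le (R : numFieldType) (n : nat) (f : 'I_n -> R) (M : R) :
  (0 < n)%N -> (forall i, `|f i| <= M) -> `|n%:R^-1 * \sum_(i < n) f i| <= M.
Proof.
move=> n0 fM; have n0R : 0 < n%:R :> R by rewrite ltr0n.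
rewrite normrM normfV (ger0_norm (ltW n0R)) ler_pdivrMl //.
apply: (le_trans (ler_norm_sum _ _ _)).
apply: (le_trans (ler_sum _ (fun i _ => fM i))).
by rewrite sumr_const card_ord mulr_natl.
Qed.

Theorem mainTheorem8 (R : realType) (d : nat) (gamma : R)
  (hgamma : (0 < gamma) \/ (gamma < -1)) (theta : 'rV[R]_d) :
  exists M : R, forall (n : nat) (X : 'I_n -> 'rV[R]_d) (Y : 'I_n -> bool),
    (1 <= n)%N -> `| dotv theta (S_gamma gamma theta X Y) | <= M.
Proof.
have a0 : gamma + 1 != 0 by case: hgamma => ?; apply/negP => /eqP; lra.
have b0 : 0 < gamma / (gamma + 1).
  case: hgamma => ?; first by rewrite divr_gt0 //; lra.
  by rewrite -divrNN divr_gt0 //; lra.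
exists ((1 + (gamma / (gamma + 1))^-1) / `|gamma + 1|) => n X Y n0.
rewrite /S_gamma dotvZ dotv_sum; apply: norm_mean_le => // i.
by rewrite dotvZ; apply: scaled_logistic_residual_le.
Qed.
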